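(* For every $n\ge1$, $$\tilde A_n(p,q)=\sum_{j=0}^{\lfloor n/2\rfloor}c_{n,j}(p+q)^j(1+pq)^{\lfloor n/2\rfloor-j},$$ where $c_{n,j}$ is the number of permutations $\pi\in\mathfrak S_n$ with $\mathrm{odes}(\pi)=j$ and $\mathrm{edes}(\pi)=0$ (so $A_n(p,0)=\sum_j c_{n,j}p^j$), and $c_{n,j}$ is a positive integer for every $0\le j\le\lfloor n/2\rfloor$.
   Context: For a permutation $\pi=a_1\cdots a_n$ of $[n]$, an index $i\in[n-1]$ is a descent if $a_i>a_{i+1}$; $\mathrm{odes}(\pi)$ and $\mathrm{edes}(\pi)$ count descents at odd and even positions. $A_n(p,q)=\sum_{\pi\in\mathfrak S_n}p^{\mathrm{odes}(\pi)}q^{\mathrm{edes}(\pi)}$. $\tilde A_n(p,q)=A_n(p,q)$ if $n$ is odd and $\tilde A_n(p,q)=(1+q)A_n(p,q)$ if $n$ is even. *)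

From HB Require Import structures.
From mathcomp Require Import all_boot all_order all_algebra all_fingroup.
Set Implicit Arguments. Unset Strict Implicit. Unset Printing Implicit Defensive.
Import GRing.Theory.

(* A permutation pi of [n] is modelled as s : {perm 'I_n}; its one-line word
   a_1 ... a_n is [seq val (s i) | i <- enum 'I_n] (values shifted to 0..n-1,
   which does not affect descents). Positions are 1-indexed as in the paper:
   i in [n-1] is a descent iff a_i > a_{i+1}, i.e. nth 0 w (i-1) > nth 0 w i. *)
Definition perm_word (n : nat) (s : {perm 'I_n}) : seq nat :=
  [seq val (s i) | i <- enum 'I_n].

Definition descents (n : nat) (s : {perm 'I_n}) : seq nat :=
  [seq i <- iota 1 n.-1 | nth 0 (perm_word s) i < nth 0 (perm_word s) i.-1].

Definition odes (n : nat) (s : {perm 'I_n}) : nat := count odd (descents s).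
Definition edes (n : nat) (s : {perm 'I_n}) : nat :=
  count (fun i => ~~ odd i) (descents s).

Local Open Scope ring_scope.

Definition A_pq (R : comRingType) (n : nat) (p q : R) : R :=
  \sum_(s : {perm 'I_n}) p ^+ odes s * q ^+ edes s.

Definition At_pq (R : comRingType) (n : nat) (p q : R) : R :=
  if odd n then A_pq n p q else (1 + q) * A_pq n p q.

Local Close Scope ring_scope.

Definition c_coef (n j : nat) : nat :=
  #|[set s : {perm 'I_n} | (odes s == j) && (edes s == 0)]|.

From mathcomp Require Import all_boot all_order all_algebra all_fingroup.
From mathcomp Require Import zify ring.
Set Implicit Arguments. Unset Strict Implicit. Unset Printing Implicit Defensive.
Import GRing.Theory.

(* Put x_k = p or q according as the position k is odd or even, and let
   e_k(pi) = 1 or -1 according as pi has a descent at k or not.  Since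
   2 [descent] x_k + 2 [ascent] = (x_k - 1) e_k + (1 + x_k), expanding the product
   over the n - 1 positions gives
     2^(n-1) A_n = sum_J prod_(k in J) (x_k - 1) prod_(k notin J) (1 + x_k) W(J),
   W(J) = sum_pi prod_(k in J) e_k(pi).  Reversing the entries spanned by a
   maximal run of J with an odd number of positions changes the sign of
   prod_(k in J) e_k, so W(J) = 0 unless J has as many odd as even positions;
   for such J with r positions of each parity, the coefficient of W(J) in
   2^(n-1) Atilde_n is (1 + pq - (p + q))^r (1 + pq + (p + q))^(floor(n/2) - r).
   Hence 2^(n-1) Atilde_n is an integral combination of the
   (p + q)^j (1 + pq)^(floor(n/2) - j); setting q = 0 identifies its coefficients
   as 2^(n-1) c_(n,j), and 2^(n-1) cancels in Z[p,q].  The permutation exchanging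
   the values 2i - 1 and 2i for i <= j has its descents exactly at the first j
   odd positions, so c_(n,j) > 0. *)

Lemma card_ord_count n (P : pred nat) : #|[pred i : 'I_n | P i]| = count P (iota 0 n).
Proof.
rewrite -sum1_card (eq_bigl (fun i : 'I_n => P i)) //.
by rewrite -(big_mkord P (fun _ => 1)) sum1_count /index_iota subn0.
Qed.

Lemma iota0_succ n : iota 0 n.+1 = iota 0 n ++ [:: n].
Proof. by rewrite -addn1 iotaD. Qed.

Lemma count_odd_iota n : count odd (iota 0 n) = n./2.
Proof.
elim: n => [|n IH] //.
by rewrite iota0_succ count_cat IH /= addn0 addnC -uphalf_half.
Qed.

Lemma count_even_iota n : count (fun k => ~~ odd k) (iota 0 n) = uphalf n.
Proof.
have : n./2 + count (fun k => ~~ odd k) (iota 0 n) = n.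
  by rewrite -[in RHS](size_iota 0 n) -(count_predC odd) count_odd_iota.
have := odd_double_half n; rewrite uphalf_half -muln2; lia.
Qed.

Lemma count_iota_gtn m n (P : pred nat) :
  count (fun k => (k < m) && P k) (iota 0 n) = count P (iota 0 (minn m n)).
Proof.
case: (leqP m n) => hmn; last first.
  by apply: eq_in_count => k; rewrite mem_iota /= => hk; rewrite (ltn_trans hk hmn).
rewrite -(subnKC hmn) iotaD count_cat -[RHS]addn0; congr (_ + _).
  by apply: eq_in_count => k; rewrite mem_iota /= => ->.
rewrite (@eq_in_count _ _ pred0) ?count_pred0 // => k.
by rewrite mem_iota /= => /andP[hk _]; rewrite ltnNge hk.
Qed.

Lemma count_iota_between lo hi n : hi < n ->
  count (fun k => lo <= k <= hi) (iota 0 n) = hi.+1 - lo.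
Proof.
move=> hn; rewrite (eq_count (a2 := fun k => (k < hi.+1) && (lo <= k))); last first.
  by move=> k; rewrite andbC.
rewrite count_iota_gtn (minn_idPl hn); elim: hi {hn} => [|hi IH].
  by case: lo.
by rewrite iota0_succ count_cat IH /=; lia.
Qed.

Section Descents.

Variable n : nat.
Implicit Type s : {perm 'I_n.+1}.

Definition entry s (k : nat) : nat := val (s (inord k)).

(* [des s k] is a descent at position k + 1 of the paper, so that the odd
   positions of the paper are the even k. *)
Definition des s (k : nat) : bool := entry s k.+1 < entry s k.

Lemma entry_inj s x y : x <= n -> y <= n -> entry s x = entry s y -> x = y.
Proof. by move=> hx hy /val_inj /perm_inj /(congr1 val) /=; rewrite !inordK. Qed.

Lemma nth_perm_word s k : k <= n -> nth 0 (perm_word s) k = entry s k.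
Proof.
move=> hk; rewrite /perm_word (nth_map ord0) ?size_enum_ord //.
by congr (val (s _)); apply: val_inj; rewrite /= inordK // nth_enum_ord.
Qed.

Lemma descentsE s : descents s = [seq k.+1 | k <- iota 0 n & des s k].
Proof.
rewrite /descents /=.
have -> : iota 1 n = map S (iota 0 n) by rewrite -(iotaDl 1).
rewrite filter_map; congr map; apply: eq_in_filter => k; rewrite mem_iota => hk /=.
by rewrite !nth_perm_word //; lia.
Qed.

Lemma odesE s : odes s = count (fun k => des s k && ~~ odd k) (iota 0 n).
Proof.
rewrite /odes descentsE count_map count_filter.
by apply: eq_count => k /=; rewrite andbC.
Qed.

Lemma edesE s : edes s = count (fun k => des s k && odd k) (iota 0 n).
Proof.
rewrite /edes descentsE count_map count_filter.
by apply: eq_count => k /=; rewrite negbK andbC.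
Qed.

End Descents.

Lemma odes_le n (s : {perm 'I_n.+1}) : odes s <= uphalf n.
Proof. by rewrite odesE -count_even_iota; apply: sub_count => k /andP[]. Qed.

Section Runs.

Variable u : pred nat.

Lemma run_start b : u b ->
  exists lo, [/\ lo <= b, forall k, lo <= k <= b -> u k & lo = 0 \/ ~~ u lo.-1].
Proof.
elim: b => [|b IH] ub.
  by exists 0; split=> //; [move=> k; rewrite leqn0 => /eqP -> | left].
have [ub'|nub'] := boolP (u b); last first.
  by exists b.+1; split=> //; [move=> k; rewrite -eqn_leq => /eqP <- | right].
have [lo [hlo run left]] := IH ub'; exists lo; split=> //; first lia.
move=> k hk; have [hkb|hkb] := ltnP k b.+1; first by apply: run; lia.
by have -> : k = b.+1 by lia.
Qed.

Lemma count_parity_full_run lo L :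
  (forall k, lo <= k < lo + L.*2 -> u k) ->
  count (fun k => u k && odd k) (iota lo L.*2) =
  count (fun k => u k && ~~ odd k) (iota lo L.*2).
Proof.
elim: L lo => [|L IH] lo run //=.
have [u0 u1] : u lo /\ u lo.+1 by split; apply: run; lia.
rewrite IH => [|k hk]; last by apply: run; lia.
by rewrite u0 u1; case: (odd lo); rewrite /= ?addnS.
Qed.

Lemma count_parity_even_runs M :
  (forall lo hi, lo <= hi < M -> (forall k, lo <= k <= hi -> u k) ->
     ~~ u hi.+1 -> lo = 0 \/ ~~ u lo.-1 -> odd (hi - lo)) ->
  ~~ u M ->
  count (fun k => u k && odd k) (iota 0 M) = count (fun k => u k && ~~ odd k) (iota 0 M).
Proof.
move=> even_runs.
suff balanced b : b <= M -> ~~ u b ->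
    count (fun k => u k && odd k) (iota 0 b) = count (fun k => u k && ~~ odd k) (iota 0 b).
  exact: balanced.
elim/ltn_ind: b => -[|b] IH hbM ub //.
have [ub'|nub'] := boolP (u b); last first.
  by rewrite iota0_succ !count_cat /= (negbTE nub') IH //; lia.
have [lo [hlo run left]] := run_start ub'.
have [L hL] : exists L, b.+1 - lo = L.*2.
  exists (b.+1 - lo)./2; rewrite -[LHS]odd_double_half.
  have := even_runs lo b; rewrite hlo hbM => /(_ isT run ub left).
  by rewrite subSn // /= => ->.
rewrite -(subnKC (leqW hlo)) hL iotaD !count_cat count_parity_full_run; last first.
  by move=> k hk; apply: run; rewrite -muln2 in hL; lia.
congr (_ + _); case: lo hlo {run hL} left => [|lo] // hlo [//|nul].
by rewrite iota0_succ !count_cat /= (negbTE nul) IH //; lia.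
Qed.

End Runs.

Lemma perm_of_involution M (f : nat -> nat) :
  (forall k, k < M -> f k < M) -> (forall k, k < M -> f (f k) = k) ->
  exists s : {perm 'I_M}, forall k : 'I_M, val (s k) = f k.
Proof.
move=> f_lt fK; pose g (k : 'I_M) : 'I_M := insubd k (f k).
have gE k : val (g k) = f k by rewrite val_insubd f_lt.
have gK : involutive g by move=> k; apply: val_inj; rewrite !gE fK.
by exists (perm (can_inj gK)) => k; rewrite permE gE.
Qed.

Definition rev_between lo hi k := if lo <= k <= hi then lo + hi - k else k.

Lemma rev_between_lt lo hi M k : hi < M -> k < M -> rev_between lo hi k < M.
Proof. by rewrite /rev_between; case: ifP; lia. Qed.

Lemma rev_betweenK lo hi : involutive (rev_between lo hi).
Proof.
move=> k; rewrite /rev_between; case hk: (lo <= k <= hi); last by rewrite hk.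
have -> : lo <= lo + hi - k <= hi by lia.
lia.
Qed.

Lemma rev_between_out lo hi k : ~~ (lo <= k <= hi) -> rev_between lo hi k = k.
Proof. by rewrite /rev_between => /negbTE ->. Qed.

Lemma rev_between_perm M lo hi : hi < M ->
  exists s : {perm 'I_M}, forall k : 'I_M, val (s k) = rev_between lo hi k.
Proof.
move=> hM; apply: perm_of_involution => k hk; first exact: rev_between_lt.
exact: rev_betweenK.
Qed.

Local Open Scope ring_scope.

Definition des_sign n (s : {perm 'I_n.+1}) (i : 'I_n) : int := if des s i then 1 else -1.

Definition sign_sum n (J : {set 'I_n}) : int :=
  \sum_(s : {perm 'I_n.+1}) \prod_(i in J) des_sign s i.

(* Reversing the entries in positions lo, ..., hi + 1 turns a descent at i in
   [lo, hi] into an ascent at lo + hi - i and vice versa, and changes no other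
   position of J, because J contains neither lo - 1 nor hi + 1. *)
Section OddRun.

Variables (n lo hi : nat) (J : {set 'I_n}).
Hypotheses (hi_lt : (lo <= hi < n)%N) (hl_even : ~~ odd (hi - lo)).
Hypothesis run_in : forall i : 'I_n, (lo <= i <= hi)%N -> i \in J.
Hypothesis run_max : forall i : 'I_n, i \in J -> (i.+1 != lo) && (i != hi.+1 :> nat).
Variables (r : {perm 'I_n.+1}) (r' : {perm 'I_n}).
Hypotheses (rE : forall k, val (r k) = rev_between lo hi.+1 k)
           (r'E : forall k, val (r' k) = rev_between lo hi k).

Lemma entry_rev s k : (k <= n)%N -> entry (r * s) k = entry s (rev_between lo hi.+1 k).
Proof.
move=> hk; rewrite /entry permM; congr (val (s _)); apply: val_inj.
by rewrite rE /= !inordK //; apply: rev_between_lt; lia.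
Qed.

Lemma des_sign_rev_in s (i : 'I_n) : (lo <= i <= hi)%N ->
  des_sign (r * s) i = - des_sign s (r' i).
Proof.
move=> i_run; have i_lt := ltn_ord i.
rewrite /des_sign /des !entry_rev //; try lia.
have -> : rev_between lo hi.+1 i.+1 = r' i by rewrite r'E /rev_between; do 2 case: ifP; lia.
have -> : rev_between lo hi.+1 i = (r' i).+1 by rewrite r'E /rev_between; do 2 case: ifP; lia.
have : entry s (r' i) != entry s (r' i).+1.
  by apply/eqP => /entry_inj; have := ltn_ord (r' i); lia.
by case: ltngtP => //; rewrite opprK.
Qed.

Lemma des_sign_rev_out s (i : 'I_n) : i \in J -> ~~ (lo <= i <= hi)%N ->
  des_sign (r * s) i = des_sign s i.
Proof.
move=> iJ i_out; have := run_max iJ; have i_lt := ltn_ord i.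
move=> /andP[/eqP ne_lo /eqP ne_hi].
by rewrite /des_sign /des !entry_rev ?(ltnW i_lt) // !rev_between_out //; lia.
Qed.

Lemma prod_des_sign_rev s :
  \prod_(i in J) des_sign (r * s) i = - \prod_(i in J) des_sign s i.
Proof.
pose run (i : 'I_n) := (lo <= i <= hi)%N.
have run_inJ i : ((i \in J) && run i) = run i.
  by case ri: (run i); rewrite ?andbF ?andbT ?run_in.
have run_rev i : run (r' i) = run i by rewrite /run r'E /rev_between; case: ifP; lia.
have run_card : #|[pred i | (i \in J) && run i]| = (hi.+1 - lo)%N.
  have -> : #|[pred i | (i \in J) && run i]| = #|[pred i : 'I_n | lo <= i <= hi]%N|.
    by apply: eq_card => i; rewrite !inE run_inJ.
  by rewrite (card_ord_count n (fun k => lo <= k <= hi)%N) count_iota_between // (andP hi_lt).2.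
rewrite (bigID run) [\prod_(i in J) _](bigID run) /=.
rewrite (eq_bigr (fun i => - des_sign s (r' i))); last first.
  by move=> i /andP[_]; apply: des_sign_rev_in.
rewrite [X in _ * X = _](eq_bigr (des_sign s)); last first.
  by move=> i /andP[iJ]; apply: des_sign_rev_out.
rewrite prodrN run_card -signr_odd subSn ?(andP hi_lt).1 //= hl_even expr1 mulN1r.
rewrite mulNr [in RHS](reindex_inj (@perm_inj _ r')) /=.
by congr (- (_ * _)); apply: eq_bigl => i; rewrite unfold_in /= !run_inJ run_rev.
Qed.

End OddRun.

Lemma sign_sum_odd_run n (J : {set 'I_n}) lo hi :
  (lo <= hi < n)%N -> ~~ odd (hi - lo) ->
  (forall i : 'I_n, (lo <= i <= hi)%N -> i \in J) ->
  (forall i : 'I_n, i \in J -> (i.+1 != lo) && (i != hi.+1 :> nat)) ->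
  sign_sum J = 0.
Proof.
move=> hi_lt hl_even run_in run_max.
have [r rE] := @rev_between_perm n.+1 lo hi.+1 (andP hi_lt).2.
have [r' r'E] := @rev_between_perm n lo hi (andP hi_lt).2.
have sum_opp : sign_sum J = - sign_sum J.
  rewrite {1}/sign_sum (reindex_inj (mulgI r)) /= -sumrN.
  by apply: eq_bigr => s _; apply: (prod_des_sign_rev hi_lt).
by move: sum_opp; lia.
Qed.

Definition balanced n (J : {set 'I_n}) :=
  #|[set i in J | odd i]| == #|[set i in J | ~~ odd i]|.

Lemma sign_sum_unbalanced n (J : {set 'I_n}) : ~~ balanced J -> sign_sum J = 0.
Proof.
apply: contraNeq => sum_neq0.
pose u k := k \in [seq val i | i <- enum J].
have uE (i : 'I_n) : u i = (i \in J) by rewrite /u (mem_map val_inj) mem_enum.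
have u_lt k : u k -> (k < n)%N by case/mapP => i _ ->; apply: ltn_ord.
have card_par (P : pred nat) : #|[set i in J | P i]| = count (fun k => u k && P k) (iota 0 n).
  rewrite cardsE -(card_ord_count n (fun k => u k && P k)).
  by apply: eq_card => i; rewrite !inE /= uE.
rewrite /balanced (card_par odd) (card_par (fun k => ~~ odd k)).
apply/eqP/count_parity_even_runs; last first.
  by apply/negP => /u_lt; rewrite ltnn.
move=> lo hi hi_lt run_in after_run before_run; apply/negPn/negP => hl_even.
case/negP: sum_neq0; apply/eqP/(sign_sum_odd_run hi_lt hl_even).
- by move=> i /run_in; rewrite uE.
- move=> i iJ; rewrite -uE in iJ; apply/andP; split; apply/eqP => eq_i.
    by case: before_run => [|/negP nu]; [lia | apply: nu; rewrite -eq_i].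
  by move: after_run; rewrite -eq_i iJ.
Qed.

Section Expansion.

Variables (R : comRingType) (p q : R).

Definition pos_var (k : nat) : R := if odd k then q else p.

Lemma prod_des_weight (D : pred nat) (l : seq nat) :
  p ^+ count (fun k => D k && ~~ odd k) l * q ^+ count (fun k => D k && odd k) l =
  \prod_(k <- l) (if D k then pos_var k else 1).
Proof.
elim: l => [|k l IH]; first by rewrite big_nil mulr1.
rewrite big_cons -IH /= /pos_var; case: (D k) (odd k) => -[] /=; rewrite ?add0n ?mul1r //.
  by rewrite exprS mulrCA.
by rewrite exprS mulrA.
Qed.

Lemma des_weight n (s : {perm 'I_n.+1}) :
  p ^+ odes s * q ^+ edes s = \prod_(i < n) (if des s i then pos_var i else 1).
Proof.
rewrite odesE edesE prod_des_weight.
have -> : iota 0 n = index_iota 0 n by rewrite /index_iota subn0.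
by rewrite big_mkord.
Qed.

Definition subset_coef n (J : {set 'I_n}) : R :=
  \prod_(i < n) (if i \in J then pos_var i - 1 else 1 + pos_var i).

Lemma A_pq_expand n :
  2 ^+ n * A_pq n.+1 p q = \sum_(J : {set 'I_n}) subset_coef J * (sign_sum J)%:~R.
Proof.
have two_weight s (i : 'I_n) : 2 * (if des s i then pos_var i else 1) =
    (pos_var i - 1) * (des_sign s i)%:~R + (1 + pos_var i).
  by rewrite /des_sign; case: (des s i); rewrite ?rmorph1 ?rmorphN1; ring.
rewrite /A_pq mulr_sumr.
rewrite (eq_bigr (fun s => \prod_(i < n) (2 * (if des s i then pos_var i else 1)))); last first.
  by move=> s _; rewrite des_weight big_split prodr_const card_ord.
under eq_bigr => s _ do under eq_bigr => i _ do rewrite two_weight.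
under eq_bigr => s _ do rewrite bigA_distr.
rewrite exchange_big /=; apply: eq_bigr => J _.
rewrite /sign_sum rmorph_sum mulr_sumr; apply: eq_bigr => s _.
rewrite rmorph_prod /subset_coef (big_mkcond (fun i => i \in J)) -big_split /=.
by apply: eq_bigr => i _; case: (i \in J); rewrite ?mulr1.
Qed.

End Expansion.

Lemma card_odd_ord n : #|[set i : 'I_n | odd i]| = n./2.
Proof. by rewrite cardsE (card_ord_count n odd) count_odd_iota. Qed.

Lemma card_even_ord n : #|[set i : 'I_n | ~~ odd i]| = uphalf n.
Proof. by rewrite cardsE (card_ord_count n (fun k => ~~ odd k)) count_even_iota. Qed.

Lemma card_odd_sep_le n (J : {set 'I_n}) : (#|[set i in J | odd i]| <= n./2)%N.
Proof.
by rewrite -card_odd_ord subset_leq_card //; apply/subsetP => i; rewrite !inE => /andP[].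
Qed.

Lemma card_sep_setC (T : finType) (A : {set T}) (P : pred T) :
  #|[set i in ~: A | P i]| = (#|[set i | P i]| - #|[set i in A | P i]|)%N.
Proof.
rewrite -(cardsID A [set i | P i]) setIC -setIdE addKn setDE setIC -setIdE.
by congr #|_|; apply/setP => i; rewrite !inE.
Qed.

Section CoefClosedForm.

Variables (R : comRingType) (p q : R).

Lemma prod_parity n (A : {set 'I_n}) (a b : R) :
  \prod_(i in A) (if odd i then a else b) =
  a ^+ #|[set i in A | odd i]| * b ^+ #|[set i in A | ~~ odd i]|.
Proof.
rewrite (bigID (fun i : 'I_n => odd i)) /=.
rewrite (eq_bigr (fun=> a)) => [|i /andP[_ ->] //].
rewrite [X in _ * X](eq_bigr (fun=> b)) => [|i /andP[_ /negbTE ->] //].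
by rewrite !prodr_const; congr (_ ^+ _ * _ ^+ _); apply: eq_card => i; rewrite inE.
Qed.

Lemma subset_coefE n (J : {set 'I_n}) :
  subset_coef p q J =
  (q - 1) ^+ #|[set i in J | odd i]| * (p - 1) ^+ #|[set i in J | ~~ odd i]| *
  ((1 + q) ^+ (n./2 - #|[set i in J | odd i]|) *
   (1 + p) ^+ (uphalf n - #|[set i in J | ~~ odd i]|)).
Proof.
rewrite /subset_coef (bigID (mem J)) /=.
rewrite (eq_bigr (fun i : 'I_n => if odd i then q - 1 else p - 1)); last first.
  by move=> i ->; rewrite /pos_var; case: ifP.
rewrite [X in _ * X](eq_bigr (fun i : 'I_n => if odd i then 1 + q else 1 + p)); last first.
  by move=> i /negbTE ->; rewrite /pos_var; case: ifP.
rewrite -(card_odd_ord n) -(card_even_ord n) -!card_sep_setC.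
rewrite prod_parity -[X in _ = _ * X]prod_parity.
by congr (_ * _); apply: eq_bigl => i; rewrite inE.
Qed.

Lemma balanced_coefE n (J : {set 'I_n}) : balanced J ->
  (if odd n then 1 + q else 1) * subset_coef p q J =
  ((1 + p * q) - (p + q)) ^+ #|[set i in J | odd i]| *
  ((1 + p * q) + (p + q)) ^+ (uphalf n - #|[set i in J | odd i]|).
Proof.
move=> /eqP bal; rewrite subset_coefE -bal.
move: #|_| (card_odd_sep_le J) => r r_le.
have -> : (1 + p * q) - (p + q) = (q - 1) * (p - 1) by ring.
have -> : (1 + p * q) + (p + q) = (1 + q) * (1 + p) by ring.
rewrite !exprMn uphalf_half; case: (odd n) => /=; last by rewrite add0n mul1r.
have -> : (1 + n./2 - r = (n./2 - r).+1)%N by lia.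
rewrite [(1 + q) ^+ _.+1]exprS.
by move: ((q - 1) ^+ r) ((p - 1) ^+ r) ((1 + q) ^+ _) ((1 + p) ^+ _) => a b c d; ring.
Qed.

End CoefClosedForm.

Section IntegralForms.

Variables (R : comRingType) (e1 e2 : R).

Definition int_form m (f : R) :=
  exists g : nat -> int, f = \sum_(j < m.+1) (g j)%:~R * e1 ^+ j * e2 ^+ (m - j).

Lemma int_form0 m : int_form m 0.
Proof. by exists (fun=> 0); rewrite big1 // => j _; rewrite !mul0r. Qed.

Lemma int_formD m f h : int_form m f -> int_form m h -> int_form m (f + h).
Proof.
move=> [g ->] [g' ->]; exists (fun j => g j + g' j).
by rewrite -big_split /=; apply: eq_bigr => j _; rewrite rmorphD; ring.
Qed.

Lemma int_formZ m (z : int) f : int_form m f -> int_form m (z%:~R * f).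
Proof.
move=> [g ->]; exists (fun j => z * g j); rewrite mulr_sumr.
by apply: eq_bigr => j _; rewrite rmorphM; ring.
Qed.

Lemma int_form1 : int_form 0 1.
Proof. by exists (fun=> 1); rewrite big_ord1 rmorph1 !expr0 !mulr1. Qed.

Lemma int_form_mule1 m f : int_form m f -> int_form m.+1 (e1 * f).
Proof.
move=> [g ->]; exists (fun j => if j is j'.+1 then g j' else 0).
rewrite [RHS]big_ord_recl /= mulr0z !mul0r add0r mulr_sumr.
by apply: eq_bigr => j _; rewrite /bump /= subSS exprS; ring.
Qed.

Lemma int_form_mule2 m f : int_form m f -> int_form m.+1 (e2 * f).
Proof.
move=> [g ->]; exists (fun j => if (j <= m)%N then g j else 0).
rewrite [RHS]big_ord_recr /= ltnn mulr0z !mul0r addr0 mulr_sumr.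
apply: eq_bigr => j _; rewrite /= -ltnS ltn_ord subSn -1?ltnS //.
by rewrite exprS; ring.
Qed.

Lemma int_form_mul_pow (c : int) a m f : int_form m f ->
  int_form (m + a) ((e2 + c%:~R * e1) ^+ a * f).
Proof.
move=> hf; elim: a => [|a IH]; first by rewrite addn0 mul1r.
rewrite addnS exprS -mulrA mulrDl -mulrA.
by apply: int_formD; [apply: int_form_mule2 | apply/int_formZ/int_form_mule1].
Qed.

Lemma int_form_binomial r m : (r <= m)%N ->
  int_form m ((e2 - e1) ^+ r * (e2 + e1) ^+ (m - r)).
Proof.
move=> le_rm; have := int_form_mul_pow (-1) r (int_form_mul_pow 1 (m - r) int_form1).
by rewrite add0n subnK // rmorphN1 rmorph1 mulN1r mul1r mulr1.
Qed.

End IntegralForms.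

Lemma At_pq_int_form (R : comRingType) (p q : R) n :
  int_form (p + q) (1 + p * q) (uphalf n) (2 ^+ n * At_pq n.+1 p q).
Proof.
have -> : At_pq n.+1 p q = (if odd n then 1 + q else 1) * A_pq n.+1 p q.
  by rewrite /At_pq /=; case: (odd n); rewrite ?mul1r.
rewrite mulrCA A_pq_expand mulr_sumr.
apply: (big_ind (int_form _ _ _)); [exact: int_form0 | exact: int_formD | move=> J _].
have [bal|unbal] := boolP (balanced J); last first.
  by rewrite sign_sum_unbalanced // !mulr0; apply: int_form0.
rewrite mulrA balanced_coefE // [_ * _%:~R]mulrC; apply: int_formZ; apply: int_form_binomial.
by have := card_odd_sep_le J; rewrite uphalf_half; lia.
Qed.

Lemma At_pq_rmorph (R S : comRingType) (f : {rmorphism R -> S}) n (p q : R) :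
  f (At_pq n p q) = At_pq n (f p) (f q).
Proof.
have fA : f (A_pq n p q) = A_pq n (f p) (f q).
  by rewrite rmorph_sum; apply: eq_bigr => s _; rewrite rmorphM !rmorphXn.
by rewrite /At_pq; case: ifP => _; rewrite ?rmorphM ?rmorphD ?rmorph1 fA.
Qed.

Lemma A_pq_q0 (R : comRingType) (p : R) n :
  A_pq n.+1 p 0 = \sum_(j < (uphalf n).+1) (c_coef n.+1 j)%:R * p ^+ j.
Proof.
pose term (s : {perm 'I_n.+1}) (j : 'I_(uphalf n).+1) :=
  if (odes s == j) && (edes s == 0%N) then p ^+ j else 0.
transitivity (\sum_(s : {perm 'I_n.+1}) \sum_(j < (uphalf n).+1) term s j).
  apply: eq_bigr => s _; rewrite expr0n /term.
  have [e0|_] := eqVneq (edes s) 0%N; last by rewrite mulr0 big1 // => j _; rewrite andbF.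
  rewrite mulr1 (bigD1 (Ordinal (odes_le s : (odes s < (uphalf n).+1)%N))) //= eqxx.
  by rewrite big1 ?addr0 // => j; rewrite andbT -val_eqE /= eq_sym => /negPf ->.
rewrite exchange_big; apply: eq_bigr => j _.
rewrite -big_mkcond /= mulr_natl -sumr_const; apply: eq_bigl => s.
by rewrite inE.
Qed.

Lemma At_pq_q0 (R : comRingType) (p : R) n :
  At_pq n.+1 p 0 = \sum_(j < (uphalf n).+1) (c_coef n.+1 j)%:R * p ^+ j.
Proof. by rewrite /At_pq addr0 mul1r if_same A_pq_q0. Qed.

Lemma coef_sum_intrX (a : nat -> int) K j : (j < K)%N ->
  (\sum_(i < K) (a i)%:~R * 'X^i)`_j = a j.
Proof.
move=> lt_jK; have -> : \sum_(i < K) (a i)%:~R * 'X^i = \poly_(i < K) a i.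
  rewrite poly_def; apply: eq_bigr => i _.
  by rewrite -mul_polyC -[in RHS](intz (a i)) rmorph_int.
by rewrite coef_poly lt_jK.
Qed.

Local Notation bipoly := {poly {poly int}}.

Lemma At_pq_gamma_bipoly n :
  At_pq n.+1 ('Y : bipoly) 'X = \sum_(j < (uphalf n).+1)
    (c_coef n.+1 j)%:R * ('Y + 'X) ^+ j * (1 + 'Y * 'X) ^+ (uphalf n - j).
Proof.
have [g g_form] := At_pq_int_form ('Y : bipoly) 'X n.
pose ev : {rmorphism bipoly -> {poly int}} := horner_eval 0.
have evY : ev 'Y = 'X by rewrite /= horner_evalE hornerC.
have evX : ev 'X = 0 by rewrite /= horner_evalE hornerX.
have gE (j : 'I_(uphalf n).+1) : g j = 2 ^+ n * (c_coef n.+1 j)%:R.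
  have := congr1 (fun f => (ev f)`_j) g_form.
  rewrite /= rmorphM rmorphXn rmorph_nat At_pq_rmorph rmorph_sum evY evX.
  under eq_bigr => i _ do rewrite !(rmorphM, rmorphXn, rmorphD, rmorph1, rmorph_int) evY evX
    addr0 mulr0 addr0 expr1n mulr1.
  rewrite At_pq_q0.
  have -> : 2 ^+ n * \sum_(i < (uphalf n).+1) (c_coef n.+1 i)%:R * 'X^i =
            \sum_(i < (uphalf n).+1) (2 ^+ n * (c_coef n.+1 i)%:R : int)%:~R * 'X^i :> {poly int}.
    by rewrite mulr_sumr; apply: eq_bigr => i _; rewrite rmorphM rmorphXn !rmorph_nat mulrA.
  by rewrite (coef_sum_intrX (fun i => 2 ^+ n * (c_coef n.+1 i)%:R)) // coef_sum_intrX.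
have two_neq0 : (2 : bipoly) ^+ n != 0.
  by rewrite expf_neq0 // -polyC_natr polyC_eq0 -polyC_natr polyC_eq0.
apply: (mulfI two_neq0); rewrite g_form mulr_sumr; apply: eq_bigr => j _.
by rewrite gE rmorphM rmorphXn !rmorph_nat !mulrA.
Qed.

Lemma bipoly_eval (R : comRingType) (p q : R) :
  exists phi : {rmorphism bipoly -> R}, phi 'Y = p /\ phi 'X = q.
Proof.
pose cfp : commr_rmorph (intr : int -> R) p := fun a => mulrC _ _.
pose psi : {rmorphism {poly int} -> R} := horner_morph cfp.
pose cfq : commr_rmorph psi q := fun a => mulrC _ _.
exists (horner_morph cfq).
by rewrite /= horner_morphC horner_morphX /psi /= horner_morphX.
Qed.

Lemma At_pq_gamma (R : comRingType) (p q : R) n :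
  At_pq n.+1 p q = \sum_(j < (uphalf n).+1)
    (c_coef n.+1 j)%:R * (p + q) ^+ j * (1 + p * q) ^+ (uphalf n - j).
Proof.
have [phi [phiY phiX]] := bipoly_eval p q.
have := congr1 phi (At_pq_gamma_bipoly n).
rewrite At_pq_rmorph phiY phiX rmorph_sum => ->; apply: eq_bigr => j _.
by rewrite !(rmorphM, rmorphXn, rmorphD, rmorph1, rmorph_nat) phiY phiX.
Qed.

Local Close Scope ring_scope.

Definition swap_pairs j k := if k < j.*2 then (if odd k then k.-1 else k.+1) else k.

Lemma swap_pairs_lt j M k : j.*2 <= M -> k < M -> swap_pairs j k < M.
Proof.
rewrite /swap_pairs; have := odd_double_half k; rewrite -!muln2.
by case: ifP; case: (odd k) => /=; lia.
Qed.

Lemma swap_pairsK j k : swap_pairs j (swap_pairs j k) = k.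
Proof.
rewrite /swap_pairs; have := odd_double_half k; rewrite -!muln2.
case: (ltnP k (j * 2)) => hk; last by rewrite ltnNge hk.
case ok: (odd k) => /= hk2.
  have -> : k.-1 < j * 2 by lia.
  by case: k ok {hk hk2} => //= k' /negbTE ->.
have -> : k.+1 < j * 2 by lia.
by rewrite ok.
Qed.

Lemma des_swap_pairs n j (s : {perm 'I_n.+1}) : j.*2 <= n.+1 ->
  (forall k, val (s k) = swap_pairs j k) ->
  forall k, k < n -> des s k = (k < j.*2) && ~~ odd k.
Proof.
move=> le_jn sE k lt_kn; rewrite /des /entry !sE !inordK /swap_pairs; try lia.
have := odd_double_half k; rewrite -!muln2 /=.
by case: (odd k) => /= hk; do 2 case: ifP; lia.
Qed.

Lemma c_coef_gt0 n j : j <= uphalf n -> 0 < c_coef n.+1 j.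
Proof.
rewrite geq_uphalf_double => le_jn.
have [s sE] := @perm_of_involution n.+1 (swap_pairs j) (fun k => swap_pairs_lt le_jn)
  (fun k _ => swap_pairsK j k).
have desE := des_swap_pairs le_jn sE.
apply/card_gt0P; exists s; rewrite inE; apply/andP; split; apply/eqP.
  rewrite odesE (eq_in_count (a2 := fun k => (k < j.*2) && ~~ odd k)); last first.
    by move=> k; rewrite mem_iota /= => lt_kn; rewrite desE // -andbA andbb.
  rewrite count_iota_gtn count_even_iota; case: (leqP j.*2 n) => lt_nj.
    exact: uphalf_double.
  by rewrite uphalfE (_ : n.+1 = j.*2) ?doubleK //; apply/anti_leq; rewrite le_jn lt_nj.
rewrite edesE (eq_in_count (a2 := pred0)) ?count_pred0 // => k.
by rewrite mem_iota /= => lt_kn; rewrite desE // -andbA andNb andbF.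
Qed.

Local Open Scope ring_scope.

Theorem mainTheorem5 (n : nat) (hn : (0 < n)%N) :
  (forall (R : comRingType) (p q : R),
      At_pq n p q =
      \sum_(j < (n./2).+1)
         (c_coef n j)%:R * (p + q) ^+ j * (1 + p * q) ^+ (n./2 - j)) /\
  (forall j : nat, (j <= n./2)%N -> (0 < c_coef n j)%N).
Proof.
case: n hn => [|n] // _; rewrite -uphalfE.
by split=> [R p q | j]; [apply: At_pq_gamma | apply: c_coef_gt0].
Qed.
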